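(* Let $\kappa>0$, $-1<\sigma\le 0$, $\Delta t>0$, and initial data $a^0<b^0$ and $u^0$ with $V:=\int_{a^0}^{b^0}u^0\,dx>0$. Let $T>0$ satisfy $T<\frac{b^0-a^0}{2(1+\sigma)}$. Let $(a^n,b^n,u^n,\lambda^n)$ be generated by either the first order scheme or the second order scheme described in the context (with arbitrary real values of the one-sided derivative approximations, and assuming the elliptic problems involved admit solutions). Then for every integer $n\ge0$ with $(n+1)\Delta t\le T$: (i) $a^0+\sigma T\le a^{n+1}\le a^0+(1+\sigma)T$ and $b^0-(1+\sigma)T\le b^{n+1}\le b^0-\sigma T$; (ii) $0\le \lambda^{n+1}\le \dfrac{\kappa V+2}{b^0-a^0-2(1+\sigma)T}$; (iii) $\displaystyle\int_{a^{n+1}}^{b^{n+1}}\Big(\sqrt{1+(\partial_x u^{n+1})^2}+\kappa (u^{n+1})^2\Big)dx\le \frac{\kappa V^2+2V}{b^0-a^0-2(1+\sigma)T}+b^0-a^0-2\sigma T$. In particular $\lambda^{n+1}$ and the integral in (iii) are bounded by a constant depending only on $a^0,b^0,T,V,\kappa,\sigma$.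
   Context: Elliptic step: given $a<b$, $(u,\lambda)$ with $u\in C^2((a,b))\cap C^1([a,b])$ is said to solve the quasi-static problem on $(a,b)$ with volume $V$ if $$\partial_x\Big(\frac{\partial_x u}{\sqrt{1+(\partial_x u)^2}}\Big)-\kappa u+\lambda=0 \text{ on }(a,b),\quad u(a)=u(b)=0,\quad \int_a^b u\,dx=V.$$ First order scheme: given $a^n,b^n,u^n$ and real numbers $d_0^n,d_N^n$ (approximations of $\partial_x u^n$ at $a^n$ and $b^n$), set $$\frac{a^{n+1}-a^n}{\Delta t}=\sigma+\frac{1}{\sqrt{1+(d_0^n)^2}},\qquad \frac{b^{n+1}-b^n}{\Delta t}=-\sigma-\frac{1}{\sqrt{1+(d_N^n)^2}},$$ and let $(u^{n+1},\lambda^{n+1})$ solve the quasi-static problem on $(a^{n+1},b^{n+1})$ with volume $V$. Second order scheme: first perform the first order step to get a predictor $(\tilde a^{n+1},\tilde b^{n+1},\tilde u^{n+1})$; with real numbers $\tilde d_0^{n+1},\tilde d_N^{n+1}$ (approximations of $\partial_x\tilde u^{n+1}$ at $\tilde a^{n+1},\tilde b^{n+1}$) set $$\frac{a^{n+1}-a^n}{\Delta t}=\sigma+\frac12\Big(\frac{1}{\sqrt{1+(d_0^n)^2}}+\frac{1}{\sqrt{1+(\tilde d_0^{n+1})^2}}\Big),\quad \frac{b^{n+1}-b^n}{\Delta t}=-\sigma-\frac12\Big(\frac{1}{\sqrt{1+(d_N^n)^2}}+\frac{1}{\sqrt{1+(\tilde d_N^{n+1})^2}}\Big),$$ and let $(u^{n+1},\lambda^{n+1})$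 solve the quasi-static problem on $(a^{n+1},b^{n+1})$ with volume $V$. *)

From Stdlib Require Import Reals Lra.
Open Scope R_scope.

Definition cont_on_closed (f : R -> R) (a b : R) : Prop :=
  forall x, a <= x <= b -> limit1_in f (fun y => a <= y <= b) (f x) x.

Definition cont_on_open (f : R -> R) (a b : R) : Prop :=
  forall x, a < x < b -> continuity_pt f x.

Definition integral_eq (f : R -> R) (a b I : R) : Prop :=
  exists pr : Riemann_integrable f a b, RiemannInt pr = I.

Definition integral_le (f : R -> R) (a b C : R) : Prop :=
  exists pr : Riemann_integrable f a b, RiemannInt pr <= C.

(* (u, lambda) solves the quasi-static problem on (a,b) with volume V;
   du is the derivative d_x u of u on [a,b] (continuous on [a,b]), so that
   u is C^1([a,b]) and C^2((a,b)). *)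
Definition quasi_static (kappa a b V lam : R) (u du : R -> R) : Prop :=
  a < b /\
  cont_on_closed u a b /\
  cont_on_closed du a b /\
  (forall x, a < x < b -> derivable_pt_lim u x (du x)) /\
  (exists d2u : R -> R,
      (forall x, a < x < b -> derivable_pt_lim du x (d2u x)) /\
      cont_on_open d2u a b) /\
  (forall x, a < x < b ->
      derivable_pt_lim (fun y => du y / sqrt (1 + (du y) ^ 2)) x
                       (kappa * u x - lam)) /\
  u a = 0 /\ u b = 0 /\
  integral_eq u a b V.

(* First order scheme, for all steps n with (n+1) dt <= T.
   d0, dN are arbitrary real approximations of d_x u^n at a^n, b^n. *)
Definition first_order_scheme (kappa sigma dt T V : R)
  (a b lam d0 dN : nat -> R) (u du : nat -> R -> R) : Prop :=
  forall n : nat, INR (S n) * dt <= T ->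
    (a (S n) - a n) / dt = sigma + 1 / sqrt (1 + (d0 n) ^ 2) /\
    (b (S n) - b n) / dt = - sigma - 1 / sqrt (1 + (dN n) ^ 2) /\
    quasi_static kappa (a (S n)) (b (S n)) V (lam (S n)) (u (S n)) (du (S n)).

(* Second order scheme (predictor ta, tb, tu, tlam; td0, tdN arbitrary real
   approximations of d_x tu^{n+1} at ta^{n+1}, tb^{n+1}). *)
Definition second_order_scheme (kappa sigma dt T V : R)
  (a b lam d0 dN : nat -> R) (u du : nat -> R -> R)
  (ta tb tlam td0 tdN : nat -> R) (tu tdu : nat -> R -> R) : Prop :=
  forall n : nat, INR (S n) * dt <= T ->
    (ta (S n) - a n) / dt = sigma + 1 / sqrt (1 + (d0 n) ^ 2) /\
    (tb (S n) - b n) / dt = - sigma - 1 / sqrt (1 + (dN n) ^ 2) /\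
    quasi_static kappa (ta (S n)) (tb (S n)) V (tlam (S n)) (tu (S n)) (tdu (S n)) /\
    (a (S n) - a n) / dt =
      sigma + / 2 * (1 / sqrt (1 + (d0 n) ^ 2) + 1 / sqrt (1 + (td0 (S n)) ^ 2)) /\
    (b (S n) - b n) / dt =
      - sigma - / 2 * (1 / sqrt (1 + (dN n) ^ 2) + 1 / sqrt (1 + (tdN (S n)) ^ 2)) /\
    quasi_static kappa (a (S n)) (b (S n)) V (lam (S n)) (u (S n)) (du (S n)).

(* Integrating the Euler-Lagrange equation over [a, b] gives
   lambda (b - a) = kappa V - [u'/sqrt(1+u'^2)]_a^b <= kappa V + 2, and testing it against u
   gives int (kappa u^2 + u'^2/sqrt(1+u'^2)) = lambda V, so lambda >= 0 and, since
   sqrt(1+p^2) = 1/sqrt(1+p^2) + p^2/sqrt(1+p^2), the energy is at most (b - a) + lambda V.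
   Both schemes move each contact point by dt (sigma + c) with c in [0, 1], so up to time T the
   length b - a stays between b0 - a0 - 2 (1 + sigma) T > 0 and b0 - a0 - 2 sigma T. *)

From Stdlib Require Import Reals Lra.
From Coquelicot Require Import Coquelicot.
Open Scope R_scope.

Lemma sqrt_1_plus_sq_pos (p : R) : 0 < sqrt (1 + p ^ 2).
Proof. apply sqrt_lt_R0; pose proof (pow2_ge_0 p); lra. Qed.

Lemma sqrt_1_plus_sq_sqr (p : R) : sqrt (1 + p ^ 2) * sqrt (1 + p ^ 2) = 1 + p ^ 2.
Proof. apply sqrt_sqrt; pose proof (pow2_ge_0 p); lra. Qed.

Lemma inv_sqrt_1_plus_sq_bound (p : R) : 0 < 1 / sqrt (1 + p ^ 2) <= 1.
Proof.
  pose proof (sqrt_1_plus_sq_pos p); pose proof (sqrt_1_plus_sq_sqr p).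
  assert (1 <= sqrt (1 + p ^ 2)) by (pose proof (pow2_ge_0 p); nra).
  split; [apply Rdiv_lt_0_compat; lra|].
  apply Rmult_le_reg_r with (sqrt (1 + p ^ 2)); [lra|].
  unfold Rdiv; rewrite Rmult_assoc, Rinv_l; lra.
Qed.

Lemma div_sqrt_1_plus_sq_bound (p : R) : -1 <= p / sqrt (1 + p ^ 2) <= 1.
Proof.
  pose proof (sqrt_1_plus_sq_pos p) as Hs; pose proof (sqrt_1_plus_sq_sqr p) as Hss.
  set (s := sqrt (1 + p ^ 2)) in *; set (q := p / s).
  assert (Hp : p = q * s) by (unfold q; field; lra).
  assert (q * q <= 1).
  { apply Rmult_le_reg_r with (s * s); [nra|].
    assert (q * q * (s * s) = p ^ 2) by (rewrite Hp; ring). nra. }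
  nra.
Qed.

Lemma div_sqrt_1_plus_sq_mul_ge0 (p : R) : 0 <= p / sqrt (1 + p ^ 2) * p.
Proof.
  pose proof (sqrt_1_plus_sq_pos p).
  replace (p / sqrt (1 + p ^ 2) * p) with (p * p / sqrt (1 + p ^ 2)) by (field; lra).
  apply Rdiv_le_0_compat; nra.
Qed.

Lemma sqrt_1_plus_sq_split (p : R) :
  sqrt (1 + p ^ 2) = 1 / sqrt (1 + p ^ 2) + p / sqrt (1 + p ^ 2) * p.
Proof.
  pose proof (sqrt_1_plus_sq_pos p); pose proof (sqrt_1_plus_sq_sqr p).
  apply Rmult_eq_reg_r with (sqrt (1 + p ^ 2)); [|lra].
  field_simplify; [nra | lra].
Qed.

Lemma continuity_cst (c : R) : continuity (fun _ => c).
Proof. apply continuity_const; intros ? ?; reflexivity. Qed.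

Lemma continuity_pow_fct (f : R -> R) (n : nat) :
  continuity f -> continuity (fun y => f y ^ n).
Proof.
  intros Hf x; apply (continuity_pt_comp f (fun y => y ^ n)); [apply Hf|].
  apply derivable_continuous_pt, derivable_pt_pow.
Qed.

Lemma continuity_sqrt_fct (f : R -> R) :
  (forall x, 0 <= f x) -> continuity f -> continuity (fun y => sqrt (f y)).
Proof. intros Hpos Hf x; apply (continuity_pt_comp f sqrt); auto using continuity_pt_sqrt. Qed.

Ltac continuity_tac :=
  repeat first [ assumption | apply continuity_cst | apply continuity_minus
               | apply continuity_plus | apply continuity_opp | apply continuity_mult
               | apply continuity_pow_fct ].

Lemma ex_RInt_continuity (f : R -> R) (a b : R) : continuity f -> ex_RInt f a b.
Proof.
  intros Hf; apply (@ex_RInt_continuous R_CompleteNormedModule).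
  intros; apply continuity_pt_filterlim, Hf.
Qed.

(* Only the interior derivative is available, so the usual FTC is replaced by the
   mean value theorem applied to [G - RInt g a], which is continuous on [a, b]. *)
Lemma is_RInt_derive_interior (G g : R -> R) (a b : R) :
  a < b -> continuity G -> continuity g ->
  (forall x, a < x < b -> derivable_pt_lim G x (g x)) ->
  is_RInt g a b (G b - G a).
Proof.
  intros Hab HG Hg HD.
  assert (Hprim : forall x, derivable_pt_lim (RInt g a) x (g x)).
  { intro x; apply is_derive_Reals, (is_derive_RInt g (RInt g a) a).
    - apply filter_forall; intro.
      apply (@RInt_correct R_CompleteNormedModule), ex_RInt_continuity, Hg.
    - apply continuity_pt_filterlim, Hg. }
  assert (Hm := MVT_gen (fun x => G x - RInt g a x) a b (fun _ => 0)).
  cbv zeta in Hm; rewrite Rmin_left, Rmax_right in Hm by lra.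
  destruct Hm as [c [_ Hc]].
  - intros x Hx; apply is_derive_Reals.
    replace 0 with (g x - g x) by ring; apply derivable_pt_lim_minus; auto.
  - intros x _; apply continuity_pt_minus; [apply HG|].
    apply derivable_continuous_pt; exists (g x); apply Hprim.
  - assert (RInt g a a = 0) by apply (@RInt_point R_CompleteNormedModule).
    replace (G b - G a) with (RInt g a b) by lra.
    apply (@RInt_correct R_CompleteNormedModule), ex_RInt_continuity, Hg.
Qed.

Lemma is_RInt_of_integral_eq (f : R -> R) (a b I : R) :
  a <= b -> integral_eq f a b I -> is_RInt f a b I.
Proof.
  intros Hab [pr <-]; rewrite <- RInt_Reals.
  apply (@RInt_correct R_CompleteNormedModule), (ex_RInt_Reals_1 _ _ _ pr).
Qed.

Lemma integral_le_of_is_RInt (f : R -> R) (a b I C : R) :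
  a <= b -> is_RInt f a b I -> I <= C -> integral_le f a b C.
Proof.
  intros Hab HI HIC.
  exists (ex_RInt_Reals_0 _ _ _ (ex_intro _ I HI)).
  rewrite <- RInt_Reals, (is_RInt_unique _ _ _ _ HI); exact HIC.
Qed.

Lemma integral_le_trans (f : R -> R) (a b C C' : R) :
  integral_le f a b C -> C <= C' -> integral_le f a b C'.
Proof. intros [pr H] HC; exists pr; lra. Qed.

Definition clamp (a b x : R) : R := Rmax a (Rmin b x).

Lemma clamp_id (a b x : R) : a <= x <= b -> clamp a b x = x.
Proof. intros; unfold clamp, Rmax, Rmin; repeat destruct Rle_dec; lra. Qed.

Lemma continuity_clamp_comp (f : R -> R) (a b : R) :
  a <= b -> cont_on_closed f a b -> continuity (fun y => f (clamp a b y)).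
Proof.
  intros Hab Hf x eps Heps.
  assert (Hin : forall y, a <= clamp a b y <= b)
    by (intros; unfold clamp, Rmax, Rmin; repeat destruct Rle_dec; lra).
  assert (Hlip : forall y, Rabs (clamp a b y - clamp a b x) <= Rabs (y - x))
    by (intros; unfold clamp, Rmax, Rmin; repeat destruct Rle_dec; split_Rabs; lra).
  destruct (Hf (clamp a b x) (Hin x) eps Heps) as [alp [Halp Hclose]].
  exists alp; split; [exact Halp|].
  intros y [_ Hy]; apply Hclose; split; [apply Hin|].
  simpl in *; unfold R_dist in *; eapply Rle_lt_trans; [apply Hlip | exact Hy].
Qed.

Section QuasiStaticEstimates.

Variables (kappa A B V lam : R) (u du : R -> R).
Hypothesis Hqs : quasi_static kappa A B V lam u du.

Let HAB : A < B.
Proof. apply Hqs. Qed.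

Let ue (y : R) : R := u (clamp A B y).
Let due (y : R) : R := du (clamp A B y).
Let flux (y : R) : R := due y / sqrt (1 + due y ^ 2).

Let ue_continuity : continuity ue.
Proof. apply continuity_clamp_comp; [lra | apply Hqs]. Qed.

Let due_continuity : continuity due.
Proof. apply continuity_clamp_comp; [lra | apply Hqs]. Qed.

Let flux_continuity : continuity flux.
Proof.
  apply continuity_div; [exact due_continuity | | intro; apply Rgt_not_eq, sqrt_1_plus_sq_pos].
  apply continuity_sqrt_fct; [intro; pose proof (pow2_ge_0 (due x)); lra | continuity_tac].
Qed.

Let clamp_interior (x : R) : A < x < B -> clamp A B x = x.
Proof. intros; apply clamp_id; lra. Qed.

Let ue_derive (x : R) : A < x < B -> derivable_pt_lim ue x (due x).
Proof.
  intros Hx; unfold due; rewrite clamp_interior by exact Hx.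
  apply derivable_pt_lim_locally_ext with (f := u) (a := A) (b := B); [exact Hx| |apply Hqs, Hx].
  intros; unfold ue; rewrite clamp_interior; auto.
Qed.

Let flux_derive (x : R) : A < x < B -> derivable_pt_lim flux x (kappa * ue x - lam).
Proof.
  intros Hx; unfold ue; rewrite clamp_interior by exact Hx.
  apply derivable_pt_lim_locally_ext
    with (f := fun y => du y / sqrt (1 + du y ^ 2)) (a := A) (b := B); [exact Hx| |apply Hqs, Hx].
  intros; unfold flux, due; rewrite clamp_interior; auto.
Qed.

Let ue_is_RInt : is_RInt ue A B V.
Proof.
  apply is_RInt_ext with (f := u); [|apply is_RInt_of_integral_eq; [lra | apply Hqs]].
  rewrite Rmin_left, Rmax_right by lra; intros; unfold ue; rewrite clamp_interior; auto.
Qed.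

Let flux_jump : flux B - flux A = kappa * V - lam * (B - A).
Proof.
  assert (Hint := is_RInt_derive_interior flux (fun y => kappa * ue y - lam) A B HAB
                    flux_continuity ltac:(continuity_tac) flux_derive).
  assert (Hint' := is_RInt_minus _ _ _ _ _ _ (is_RInt_scal _ _ _ kappa _ ue_is_RInt)
                     (is_RInt_const A B lam)).
  rewrite <- (is_RInt_unique _ _ _ _ Hint).
  etransitivity; [exact (is_RInt_unique _ _ _ _ Hint')|].
  unfold minus, plus, opp, scal; simpl; unfold mult; simpl; ring.
Qed.

Lemma quasi_static_lam_length_le : lam * (B - A) <= kappa * V + 2.
Proof.
  pose proof flux_jump.
  pose proof (div_sqrt_1_plus_sq_bound (due A)); pose proof (div_sqrt_1_plus_sq_bound (due B)).
  unfold flux in *; lra.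
Qed.

Let flux_energy_is_RInt :
  is_RInt (fun y => kappa * ue y ^ 2 + flux y * due y) A B (lam * V).
Proof.
  set (h := fun y => kappa * ue y ^ 2 + flux y * due y).
  assert (Hcont : continuity h) by (unfold h; continuity_tac).
  assert (Hder : forall x, A < x < B ->
            derivable_pt_lim (fun y => flux y * ue y) x (h x - lam * ue x)).
  { intros x Hx; replace (h x - lam * ue x) with ((kappa * ue x - lam) * ue x + flux x * due x)
      by (unfold h; ring).
    apply derivable_pt_lim_mult; auto. }
  assert (Hint := is_RInt_derive_interior (fun y => flux y * ue y) (fun y => h y - lam * ue y)
                    A B HAB ltac:(continuity_tac) ltac:(continuity_tac) Hder).
  assert (Hbd : ue A = 0 /\ ue B = 0) by (unfold ue; rewrite !clamp_id by lra; split; apply Hqs).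
  destruct Hbd as [HuA HuB]; cbv beta in Hint; rewrite HuA, HuB, !Rmult_0_r, Rminus_0_r in Hint.
  assert (Hint' := is_RInt_minus _ _ _ _ _ _
                     (@RInt_correct R_CompleteNormedModule _ _ _ (ex_RInt_continuity h A B Hcont))
                     (is_RInt_scal _ _ _ lam _ ue_is_RInt)).
  assert (HE := eq_trans (eq_sym (is_RInt_unique _ _ _ _ Hint')) (is_RInt_unique _ _ _ _ Hint)).
  replace (lam * V) with (RInt h A B)
    by (unfold minus, plus, opp, scal in HE; simpl in HE; unfold mult in HE; simpl in HE; lra).
  apply (@RInt_correct R_CompleteNormedModule), ex_RInt_continuity, Hcont.
Qed.

Lemma quasi_static_lam_ge0 : 0 <= kappa -> 0 < V -> 0 <= lam.
Proof.
  intros Hkappa HV.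
  assert (0 <= lam * V); [|nra].
  rewrite <- (is_RInt_unique _ _ _ _ flux_energy_is_RInt).
  apply RInt_ge_0; [lra | exists (lam * V); exact flux_energy_is_RInt|].
  intros x _; pose proof (div_sqrt_1_plus_sq_mul_ge0 (due x)); pose proof (pow2_ge_0 (ue x)).
  unfold flux; nra.
Qed.

Lemma quasi_static_energy_le :
  integral_le (fun x => sqrt (1 + du x ^ 2) + kappa * u x ^ 2) A B ((B - A) + lam * V).
Proof.
  set (inv_s := fun y => 1 / sqrt (1 + due y ^ 2)).
  assert (Hinv : ex_RInt inv_s A B).
  { apply ex_RInt_continuity, continuity_div;
      [continuity_tac | | intro; apply Rgt_not_eq, sqrt_1_plus_sq_pos].
    apply continuity_sqrt_fct; [intro; pose proof (pow2_ge_0 (due x)); lra | continuity_tac]. }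
  assert (Hinv_le : RInt inv_s A B <= B - A).
  { replace (B - A) with (RInt (fun _ => 1) A B)
      by (rewrite RInt_const; unfold scal; simpl; unfold mult; simpl; ring).
    apply RInt_le; [lra | exact Hinv | apply ex_RInt_const|].
    intros x _; apply inv_sqrt_1_plus_sq_bound. }
  apply integral_le_of_is_RInt with (RInt inv_s A B + lam * V); [lra| |lra].
  apply is_RInt_ext with (f := fun y => inv_s y + (kappa * ue y ^ 2 + flux y * due y)).
  - rewrite Rmin_left, Rmax_right by lra; intros x Hx.
    unfold inv_s, flux, ue, due; rewrite clamp_interior by exact Hx.
    cbv beta; pose proof (sqrt_1_plus_sq_split (du x)); lra.
  - exact (@is_RInt_plus R_NormedModule _ _ _ _ _ _
             (@RInt_correct R_CompleteNormedModule _ _ _ Hinv) flux_energy_is_RInt).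
Qed.

End QuasiStaticEstimates.

Definition contact_step (sigma dt : R) (a b : nat -> R) (n : nat) : Prop :=
  exists c0 c1, 0 <= c0 <= 1 /\ 0 <= c1 <= 1 /\
    a (S n) = a n + dt * (sigma + c0) /\ b (S n) = b n - dt * (sigma + c1).

Lemma Rdiv_step_eq (x y dt v : R) : dt <> 0 -> (x - y) / dt = v -> x = y + dt * v.
Proof. intros Hdt <-; field; exact Hdt. Qed.

Lemma first_order_scheme_step (kappa sigma dt T V : R)
  (a b lam d0 dN : nat -> R) (u du : nat -> R -> R) :
  0 < dt -> first_order_scheme kappa sigma dt T V a b lam d0 dN u du ->
  forall n, INR (S n) * dt <= T ->
  contact_step sigma dt a b n /\
  quasi_static kappa (a (S n)) (b (S n)) V (lam (S n)) (u (S n)) (du (S n)).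
Proof.
  intros Hdt Hs n Hn; destruct (Hs n Hn) as [Ha [Hb Hq]]; split; [|exact Hq].
  exists (1 / sqrt (1 + d0 n ^ 2)), (1 / sqrt (1 + dN n ^ 2)).
  pose proof (inv_sqrt_1_plus_sq_bound (d0 n)); pose proof (inv_sqrt_1_plus_sq_bound (dN n)).
  apply Rdiv_step_eq in Ha, Hb; lra.
Qed.

Lemma second_order_scheme_step (kappa sigma dt T V : R)
  (a b lam d0 dN : nat -> R) (u du : nat -> R -> R)
  (ta tb tlam td0 tdN : nat -> R) (tu tdu : nat -> R -> R) :
  0 < dt ->
  second_order_scheme kappa sigma dt T V a b lam d0 dN u du ta tb tlam td0 tdN tu tdu ->
  forall n, INR (S n) * dt <= T ->
  contact_step sigma dt a b n /\
  quasi_static kappa (a (S n)) (b (S n)) V (lam (S n)) (u (S n)) (du (S n)).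
Proof.
  intros Hdt Hs n Hn; destruct (Hs n Hn) as [_ [_ [_ [Ha [Hb Hq]]]]]; split; [|exact Hq].
  exists (/ 2 * (1 / sqrt (1 + d0 n ^ 2) + 1 / sqrt (1 + td0 (S n) ^ 2))),
         (/ 2 * (1 / sqrt (1 + dN n ^ 2) + 1 / sqrt (1 + tdN (S n) ^ 2))).
  pose proof (inv_sqrt_1_plus_sq_bound (d0 n)); pose proof (inv_sqrt_1_plus_sq_bound (td0 (S n))).
  pose proof (inv_sqrt_1_plus_sq_bound (dN n)); pose proof (inv_sqrt_1_plus_sq_bound (tdN (S n))).
  apply Rdiv_step_eq in Ha, Hb; lra.
Qed.

Lemma contact_positions (sigma dt T : R) (a b : nat -> R) :
  0 < dt -> (forall n, INR (S n) * dt <= T -> contact_step sigma dt a b n) ->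
  forall m, INR m * dt <= T ->
    a 0%nat + INR m * dt * sigma <= a m <= a 0%nat + INR m * dt * (1 + sigma) /\
    b 0%nat - INR m * dt * (1 + sigma) <= b m <= b 0%nat - INR m * dt * sigma.
Proof.
  intros Hdt Hstep; induction m as [|m IH]; intros Hm.
  - simpl; rewrite !Rmult_0_l; lra.
  - rewrite S_INR in *.
    destruct (IH ltac:(lra)) as [IHa IHb].
    destruct (Hstep m ltac:(rewrite S_INR; lra)) as [c0 [c1 [Hc0 [Hc1 [Ha Hb]]]]].
    rewrite Ha, Hb; split; split; nra.
Qed.

Theorem proposition3p1
  (kappa sigma dt T V : R)
  (a b lam d0 dN : nat -> R) (u du : nat -> R -> R)
  (ta tb tlam td0 tdN : nat -> R) (tu tdu : nat -> R -> R)
  (Hkappa : 0 < kappa) (Hsig1 : -1 < sigma) (Hsig2 : sigma <= 0)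
  (Hdt : 0 < dt) (Hab0 : a 0%nat < b 0%nat)
  (HV : integral_eq (u 0%nat) (a 0%nat) (b 0%nat) V) (HVpos : 0 < V)
  (HT : 0 < T) (HT2 : T < (b 0%nat - a 0%nat) / (2 * (1 + sigma)))
  (Hscheme : first_order_scheme kappa sigma dt T V a b lam d0 dN u du \/
             second_order_scheme kappa sigma dt T V a b lam d0 dN u du
                                 ta tb tlam td0 tdN tu tdu) :
  forall n : nat, INR (S n) * dt <= T ->
    (a 0%nat + sigma * T <= a (S n) <= a 0%nat + (1 + sigma) * T /\
     b 0%nat - (1 + sigma) * T <= b (S n) <= b 0%nat - sigma * T) /\
    (0 <= lam (S n) <=
       (kappa * V + 2) / (b 0%nat - a 0%nat - 2 * (1 + sigma) * T)) /\
    integral_le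
      (fun x => sqrt (1 + (du (S n) x) ^ 2) + kappa * (u (S n) x) ^ 2)
      (a (S n)) (b (S n))
      ((kappa * V ^ 2 + 2 * V) / (b 0%nat - a 0%nat - 2 * (1 + sigma) * T)
       + b 0%nat - a 0%nat - 2 * sigma * T).
Proof.
  assert (Hstep : forall n, INR (S n) * dt <= T -> contact_step sigma dt a b n /\
            quasi_static kappa (a (S n)) (b (S n)) V (lam (S n)) (u (S n)) (du (S n))).
  { destruct Hscheme; [eapply first_order_scheme_step | eapply second_order_scheme_step]; eauto. }
  intros n Hn.
  destruct (contact_positions sigma dt T a b Hdt (fun k Hk => proj1 (Hstep k Hk)) (S n) Hn)
    as [Ha Hb].
  pose proof (pos_INR (S n)).
  assert (Hpos : (a 0%nat + sigma * T <= a (S n) <= a 0%nat + (1 + sigma) * T /\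
                  b 0%nat - (1 + sigma) * T <= b (S n) <= b 0%nat - sigma * T))
    by (split; split; nra).
  split; [exact Hpos|].
  destruct (Hstep n Hn) as [_ Hq].
  pose proof (quasi_static_lam_length_le _ _ _ _ _ _ _ Hq) as Hlam.
  pose proof (quasi_static_lam_ge0 _ _ _ _ _ _ _ Hq ltac:(lra) HVpos) as Hlam0.
  set (D := b 0%nat - a 0%nat - 2 * (1 + sigma) * T).
  assert (HD : 0 < D).
  { unfold D; apply Rmult_lt_compat_r with (r := 2 * (1 + sigma)) in HT2; [|lra].
    unfold Rdiv in HT2; rewrite Rmult_assoc, Rinv_l, Rmult_1_r in HT2; lra. }
  assert (Hlam_le : lam (S n) <= (kappa * V + 2) / D).
  { apply Rmult_le_reg_r with D; [exact HD|]. unfold Rdiv; rewrite Rmult_assoc, Rinv_l by lra.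
    unfold D; nra. }
  split; [split; assumption|].
  apply integral_le_trans with (1 := quasi_static_energy_le _ _ _ _ _ _ _ Hq).
  replace ((kappa * V ^ 2 + 2 * V) / D) with (V * ((kappa * V + 2) / D)) by (field; lra).
  unfold D in *; nra.
Qed.
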